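(* Let $\rho_S$ be a symmetric state on $\mathbb{C}^3\otimes\mathbb{C}^3$ of the form $$\rho_S=\sum_{0\le i\le j\le 2}p_{ij}\,|D_{ij}\rangle\langle D_{ij}| \;+\;\big(\alpha\,|D_{11}\rangle\langle D_{02}| + \alpha^*\,|D_{02}\rangle\langle D_{11}|\big),$$ with $p_{ij}\ge0$, $\sum p_{ij}=1$, whose coefficients satisfy $p_{11}=2p_{02}=\sqrt{2}\,\alpha$. Then $\rho_S$ is separable if and only if it is PPT.
   Context: The two-qutrit Dicke states are $|D_{ii}\rangle=|ii\rangle$ and $|D_{ij}\rangle=(|ij\rangle+|ji\rangle)/\sqrt2$ for $i\ne j$, with $\{|0\rangle,|1\rangle,|2\rangle\}$ the computational basis of $\mathbb{C}^3$. Separable means a convex combination of product states $|a\rangle\langle a|\otimes|b\rangle\langle b|$; PPT means the partial transpose with respect to one subsystem is positive semidefinite. *)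

(* Complex scalars: an arbitrary numClosedFieldType C
   (e.g. R[i] for a real closed field R). *)
From HB Require Import structures.
From mathcomp Require Import all_boot all_order all_algebra.
Set Implicit Arguments. Unset Strict Implicit. Unset Printing Implicit Defensive.
Import Order.TTheory GRing.Theory Num.Theory.
Local Open Scope ring_scope.

Section QutritDefs.
Variable C : numClosedFieldType.

Definition adj m n (A : 'M[C]_(m, n)) : 'M[C]_(n, m) := (map_mx Num.conj A)^T.

Definition proj n (v : 'cV[C]_n) : 'M[C]_n := v *m adj v.

(* positive semidefinite: <x|A|x> >= 0 for all x (order of C, so real and >= 0) *)
Definition psd n (A : 'M[C]_n) : Prop := forall x : 'cV[C]_n, 0 <= (adj x *m A *m x) 0 0.

Definition unit_vec n (v : 'cV[C]_n) : Prop := (adj v *m v) 0 0 = 1.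

Definition ket (i j : 'I_3) : 'cV[C]_(3 * 3) := delta_mx (mxvec_index i j) 0.

Definition tens (a b : 'cV[C]_3) : 'cV[C]_(3 * 3) :=
  \sum_(i < 3) \sum_(j < 3) (a i 0 * b j 0) *: ket i j.

Definition ptrans (A : 'M[C]_(3 * 3)) : 'M[C]_(3 * 3) :=
  \sum_(i < 3) \sum_(j < 3) \sum_(k < 3) \sum_(l < 3)
     A (mxvec_index i j) (mxvec_index k l) *:
       delta_mx (mxvec_index i l) (mxvec_index k j).

Definition PPT (A : 'M[C]_(3 * 3)) : Prop := psd (ptrans A).

Definition separable (A : 'M[C]_(3 * 3)) : Prop :=
  exists (n : nat) (w : 'I_n -> C) (a b : 'I_n -> 'cV[C]_3),
    [/\ forall k, 0 <= w k,
        \sum_(k < n) w k = 1,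
        forall k, unit_vec (a k) /\ unit_vec (b k) &
        A = \sum_(k < n) w k *: proj (tens (a k) (b k))].

Definition dicke (i j : 'I_3) : 'cV[C]_(3 * 3) :=
  if i == j then ket i i else (sqrtC 2)^-1 *: (ket i j + ket j i).

Definition q0 : 'I_3 := @Ordinal 3 0 isT.
Definition q1 : 'I_3 := @Ordinal 3 1 isT.
Definition q2 : 'I_3 := @Ordinal 3 2 isT.

Definition rhoS (p : 'I_3 -> 'I_3 -> C) (alpha : C) : 'M[C]_(3 * 3) :=
  \sum_(i < 3) \sum_(j < 3 | (i <= j)%N) p i j *: proj (dicke i j)
  + alpha *: (dicke q1 q1 *m adj (dicke q0 q2))
  + Num.conj alpha *: (dicke q0 q2 *m adj (dicke q1 q1)).

End QutritDefs.

(* Under the constraint p11 = 2 p02 = sqrt 2 alpha, the entry <ij|rhoS|kl> vanishes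
   unless i + j = k + l, and then equals w_i w_j w_k w_l m_(i+j) with w = (1, sqrt 2, 1)
   and a moment sequence m_0, ..., m_4 read off from p: rhoS is a "Hankel state".
   If its partial transpose is positive semidefinite, so are the Hankel matrices
   (m_(i+k))_(i,k<3) and (m_(i+k+1))_(i,k<2), and these are the solvability
   conditions of the truncated Stieltjes moment problem: by Gauss quadrature,
   m_d = W1 l1^d + W2 l2^d + c4 [d = 4] with nonnegative weights and nodes, the last
   term being an atom at infinity.  Every atom is a separable Hankel state: for
   l >= 0, averaging |a><a| (x) |a><a| over the phases a = (1, z sqrt(2l), z^2 l),
   z an 8th root of unity, gives the Hankel state of (l^d), and the atom at infinity
   is |22><22|.  The converse, separable => PPT, holds for every state. *)

From HB Require Import structures.
From mathcomp Require Import all_boot all_order all_algebra.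
From mathcomp Require Import ring zify.
Import Order.TTheory GRing.Theory Num.Theory.
Local Open Scope ring_scope.

Set Implicit Arguments. Unset Strict Implicit. Unset Printing Implicit Defensive.

Lemma ord3P (i : 'I_3) : [\/ i = q0, i = q1 | i = q2].
Proof.
by case: i => [[|[|[|//]]] ?]; [apply: Or31 | apply: Or32 | apply: Or33]; apply: val_inj.
Qed.

Lemma sum3 (R : nmodType) (F : 'I_3 -> R) : \sum_(i < 3) F i = F q0 + F q1 + F q2.
Proof.
by rewrite !big_ord_recr big_ord0 /= add0r; congr (F _ + F _ + F _); apply: val_inj.
Qed.

Section Entries.
Variable C : numClosedFieldType.
Implicit Types (A B : 'M[C]_(3 * 3)) (a b : 'cV[C]_3).

Definition entry A (i j k l : 'I_3) := A (mxvec_index i j) (mxvec_index k l).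

Lemma entryP A B : (forall i j k l, entry A i j k l = entry B i j k l) -> A = B.
Proof.
move=> eqAB; apply/matrixP => r c.
by case/mxvec_indexP: r => i j; case/mxvec_indexP: c => k l; apply: eqAB.
Qed.

Lemma entryD A B i j k l : entry (A + B) i j k l = entry A i j k l + entry B i j k l.
Proof. by rewrite /entry mxE. Qed.

Lemma entryZ c A i j k l : entry (c *: A) i j k l = c * entry A i j k l.
Proof. by rewrite /entry mxE. Qed.

Lemma entry_sum n (F : 'I_n -> 'M[C]_(3 * 3)) i j k l :
  entry (\sum_r F r) i j k l = \sum_r entry (F r) i j k l.
Proof. by rewrite /entry summxE. Qed.

Lemma mxvec_index_eq (i j k l : 'I_3) :
  (mxvec_index i j == mxvec_index k l) = (i == k) && (j == l).
Proof. by rewrite (inj_eq (@cast_ord_inj _ _ _)) (inj_eq enum_rank_inj) xpair_eqE. Qed.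

Lemma sum_delta (F : 'I_3 -> C) k : \sum_i (k == i)%:R * F i = F k.
Proof.
rewrite (bigD1 k) //= eqxx mul1r big1 ?addr0 // => i; rewrite eq_sym => /negbTE->.
exact: mul0r.
Qed.

Lemma mulr_and (x : C) (b1 b2 : bool) : x * (b1 && b2)%:R = b1%:R * (b2%:R * x).
Proof. by case: b1; case: b2; rewrite ?mulr0 ?mul0r ?mulr1 ?mul1r. Qed.

Lemma ketE i j k l : ket C i j (mxvec_index k l) 0 = ((k == i) && (l == j))%:R.
Proof. by rewrite mxE mxvec_index_eq eqxx andbT. Qed.

Lemma tensE a b k l : tens a b (mxvec_index k l) 0 = a k 0 * b l 0.
Proof.
rewrite summxE; under eq_bigr => i _ do
  (rewrite summxE; under eq_bigr => j _ do rewrite mxE ketE mulr_and).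
by under eq_bigr => i _ do rewrite -mulr_sumr sum_delta; rewrite sum_delta.
Qed.

Lemma mulr_and4 (x : C) (b1 b2 b3 b4 : bool) :
  x * ((b1 && b2) && (b3 && b4))%:R = b1%:R * (b4%:R * (b3%:R * (b2%:R * x))).
Proof. by case: b1; case: b2; case: b3; case: b4; rewrite ?mulr0 ?mul0r ?mulr1 ?mul1r. Qed.

Lemma entry_ptrans A i j k l : entry (ptrans A) i j k l = entry A i l k j.
Proof.
rewrite /entry summxE; under eq_bigr => a _ do
  (rewrite summxE; under eq_bigr => b _ do
    (rewrite summxE; under eq_bigr => c _ do
      (rewrite summxE; under eq_bigr => d _ do
         rewrite mxE mxE !mxvec_index_eq mulr_and4))).
under eq_bigr => a _ do (under eq_bigr => b _ do
  (under eq_bigr => c _ do rewrite -!mulr_sumr sum_delta;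
   rewrite -!mulr_sumr sum_delta); rewrite -!mulr_sumr sum_delta).
by rewrite sum_delta.
Qed.

Lemma adjE m n (M : 'M[C]_(m, n)) i j : adj M i j = (M j i)^*.
Proof. by rewrite !mxE. Qed.

Lemma adjK m n (M : 'M[C]_(m, n)) : adj (adj M) = M.
Proof. by apply/matrixP => i j; rewrite !adjE conjCK. Qed.

Lemma adj_mul m n p (M : 'M[C]_(m, n)) (N : 'M[C]_(n, p)) : adj (M *m N) = adj N *m adj M.
Proof. by rewrite /adj map_mxM trmx_mul. Qed.

Lemma projE n (v : 'cV[C]_n) r c : proj v r c = v r 0 * (v c 0)^*.
Proof. by rewrite mxE big_ord1 adjE. Qed.

Lemma entry_proj_tens a b i j k l :
  entry (proj (tens a b)) i j k l = a i 0 * b j 0 * (a k 0 * b l 0)^*.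
Proof. by rewrite /entry projE !tensE. Qed.

Lemma ptrans_proj_tens a b : ptrans (proj (tens a b)) = proj (tens a (map_mx Num.conj b)).
Proof.
apply: entryP => i j k l; rewrite entry_ptrans !entry_proj_tens !mxE.
by rewrite !rmorphM /= !conjCK; ring.
Qed.

Lemma ptrans_sum n (w : 'I_n -> C) (F : 'I_n -> 'M[C]_(3 * 3)) :
  ptrans (\sum_r w r *: F r) = \sum_r w r *: ptrans (F r).
Proof.
apply: entryP => i j k l; rewrite entry_ptrans !entry_sum; apply: eq_bigr => r _.
by rewrite !entryZ entry_ptrans.
Qed.

End Entries.

Section Positivity.
Variable C : numClosedFieldType.

Lemma psd_proj n (v : 'cV[C]_n) : psd (proj v).
Proof.
move=> x; have -> : adj x *m proj v *m x = proj (adj x *m v).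
  by rewrite /proj adj_mul adjK !mulmxA.
by rewrite projE mul_conjC_ge0.
Qed.

Lemma psd_sum n m (w : 'I_m -> C) (F : 'I_m -> 'M[C]_n) :
  (forall k, 0 <= w k) -> (forall k, psd (F k)) -> psd (\sum_k w k *: F k).
Proof.
move=> w_ge0 F_psd x; rewrite mulmx_sumr mulmx_suml summxE.
apply: sumr_ge0 => k _; rewrite -scalemxAr -scalemxAl mxE.
exact: mulr_ge0 (w_ge0 k) (F_psd k x).
Qed.

Lemma separable_PPT (A : 'M[C]_(3 * 3)) : separable A -> PPT A.
Proof.
case=> n [w [a [b [w_ge0 _ _ ->]]]]; rewrite /PPT ptrans_sum.
by apply: psd_sum => // k; rewrite ptrans_proj_tens; apply: psd_proj.
Qed.

End Positivity.

Section Hankel.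
Variable C : numClosedFieldType.

(** [hweight i] is [sqrtC 'C(2, i)]; it absorbs the [1 / sqrtC 2] of the Dicke states. *)
Definition hweight (i : 'I_3) : C := if i == q1 then sqrtC 2 else 1.

Definition mxvec_pair (r : 'I_(3 * 3)) : 'I_3 * 'I_3 :=
  enum_val (cast_ord (esym (mxvec_cast 3 3)) r).

Lemma mxvec_pair_index i j : mxvec_pair (mxvec_index i j) = (i, j).
Proof. by rewrite /mxvec_pair cast_ordK enum_rankK. Qed.

Definition hankel (m : nat -> C) : 'M[C]_(3 * 3) :=
  \matrix_(r, c) let: (i, j) := mxvec_pair r in let: (k, l) := mxvec_pair c in
    (i + j == k + l)%N%:R * (hweight i * hweight j * hweight k * hweight l) * m (i + j)%N.

Lemma entry_hankel m i j k l : entry (hankel m) i j k l =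
  (i + j == k + l)%N%:R * (hweight i * hweight j * hweight k * hweight l) * m (i + j)%N.
Proof. by rewrite /entry mxE !mxvec_pair_index. Qed.

Lemma conj_sqrt2 : (sqrtC 2 : C)^* = sqrtC 2.
Proof. by rewrite geC0_conj // sqrtC_ge0 ler0n. Qed.

Lemma sqrt2_neq0 : (sqrtC 2 : C) != 0.
Proof. by rewrite sqrtC_eq0 pnatr_eq0. Qed.

Lemma sqrt2_sqr : (sqrtC 2 : C) ^+ 2 = 2.
Proof. exact: sqrtCK. Qed.

Lemma dickeE a b i j : dicke C a b (mxvec_index i j) 0 =
  if a == b then ((i == a) && (j == a))%:R
  else (sqrtC 2)^-1 * (((i == a) && (j == b))%:R + ((i == b) && (j == a))%:R).
Proof.
by rewrite /dicke; case: (a == b); rewrite !mxE !mxvec_index_eq !eqxx !andbT.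
Qed.

Lemma conj_dicke a b r : (dicke C a b r 0)^* = dicke C a b r 0.
Proof.
case/mxvec_indexP: r => i j; rewrite dickeE; apply: geC0_conj.
case: ifP => _; first exact: ler0n.
by rewrite mulr_ge0 ?invr_ge0 ?sqrtC_ge0 ?ler0n ?addr_ge0.
Qed.

Lemma entry_mul_adj (u v : 'cV[C]_(3 * 3)) i j k l :
  entry (u *m adj v) i j k l = u (mxvec_index i j) 0 * (v (mxvec_index k l) 0)^*.
Proof. by rewrite /entry mxE big_ord1 adjE. Qed.

(** [m_d] is the total weight of the Dicke states with [i + j = d], divided by
    ['C(4, d)], once [p q1 q1 = 2 * p q0 q2]. *)
Definition dicke_moment (p : 'I_3 -> 'I_3 -> C) (d : nat) : C :=
  match d with
  | 0 => p q0 q0 | 1 => p q0 q1 / 4 | 2 => p q0 q2 / 2 | 3 => p q1 q2 / 4 | _ => p q2 q2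
  end.

Local Notation D a b i j := (dicke C a b (mxvec_index i j) 0).

Lemma entry_rhoS p alpha i j k l : entry (rhoS p alpha) i j k l =
  \sum_(a < 3) \sum_(b < 3 | (a <= b)%N) p a b * (D a b i j * D a b k l)
  + alpha * (D q1 q1 i j * D q0 q2 k l) + alpha^* * (D q0 q2 i j * D q1 q1 k l).
Proof.
rewrite /rhoS !entryD !entryZ !entry_mul_adj !conj_dicke entry_sum.
congr (_ + _ + _); apply: eq_bigr => a _; rewrite /entry summxE.
by apply: eq_bigr => b _; rewrite mxE projE conj_dicke.
Qed.

Lemma rhoS_hankel p alpha :
  p q1 q1 = 2 * p q0 q2 -> alpha = sqrtC 2 * p q0 q2 -> (p q0 q2)^* = p q0 q2 ->
  rhoS p alpha = hankel (dicke_moment p).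
Proof.
move=> p11 -> p02_real; apply: entryP => i j k l.
rewrite entry_rhoS entry_hankel.
under eq_bigr => a _ do rewrite big_mkcond sum3.
rewrite sum3 /=.
rewrite rmorphM /= conj_sqrt2 p02_real p11 /hweight.
have := sqrt2_sqr; have := sqrt2_neq0.
case: (ord3P i) => ->; case: (ord3P j) => ->; case: (ord3P k) => ->; case: (ord3P l) => ->;
  rewrite !dickeE /= => s_neq0 s_sqr; field: s_sqr; by rewrite ?s_neq0 ?pnatr_eq0.
Qed.

End Hankel.

Section HankelForms.
Variable F : numFieldType.
Implicit Types (m u v : nat -> F) (n : nat).

Lemma binary_form_minor (a b c : F) :
  (forall x y, x \is Num.real -> y \is Num.real ->
     0 <= a * x ^+ 2 + 2 * b * x * y + c * y ^+ 2) ->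
  b ^+ 2 <= a * c.
Proof.
move=> Q.
have a_ge0 : 0 <= a.
  by have := Q 1 0 (rpred1 _) (rpred0 _); rewrite (_ : _ + _ = a) //; ring.
have c_ge0 : 0 <= c.
  by have := Q 0 1 (rpred0 _) (rpred1 _); rewrite (_ : _ + _ = c) //; ring.
have b_real : b \is Num.real.
  have /ger0_real := Q 1 1 (rpred1 _) (rpred1 _).
  rewrite (_ : _ + _ = 2 * b + (a + c)); last by ring.
  rewrite rpredDr; last exact/ger0_real/addr_ge0.
  by rewrite realMr ?rpred_nat // pnatr_eq0.
have [a0 | a_gt0] := eqVneq a 0.
  have c1_real : - (c + 1) \is Num.real by rewrite rpredN rpredD ?rpred1 ?ger0_real.
  have := Q _ _ c1_real b_real.
  rewrite a0 mul0r (_ : _ + _ = - (b ^+ 2 * (c + 2))); last by ring.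
  by rewrite oppr_ge0 pmulr_lle0 ?mul0r // ltr_wpDl ?ltr0n.
have a_real : - a \is Num.real by rewrite rpredN ger0_real.
have := Q _ _ b_real a_real; rewrite (_ : _ + _ = a * (a * c - b ^+ 2)); last by ring.
by rewrite pmulr_rge0 ?subr_ge0 // lt_def a_gt0.
Qed.

Definition hform m n u v : F := \sum_(i < n) \sum_(k < n) u i * v k * m (i + k)%N.

Definition hankel_psd m n : Prop :=
  forall u, (forall i, u i \is Num.real) -> 0 <= hform m n u u.

Lemma hformC m n u v : hform m n u v = hform m n v u.
Proof.
rewrite /hform exchange_big; apply: eq_bigr => i _; apply: eq_bigr => k _.
by rewrite addnC (mulrC (u _)).
Qed.

Lemma hform_comb m n u v (x y : F) :
  let w i := x * u i + y * v i in
  hform m n w w =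
    hform m n u u * x ^+ 2 + 2 * hform m n u v * x * y + hform m n v v * y ^+ 2.
Proof.
have -> : 2 * hform m n u v * x * y = hform m n u v * x * y + hform m n v u * x * y.
  by rewrite (hformC m n v u); ring.
rewrite /hform !mulr_suml -!big_split; apply: eq_bigr => i _.
by rewrite !mulr_suml -!big_split; apply: eq_bigr => k _ /=; ring.
Qed.

Lemma hform_cauchy_schwarz m n u v : hankel_psd m n ->
  (forall i, u i \is Num.real) -> (forall i, v i \is Num.real) ->
  hform m n u v ^+ 2 <= hform m n u u * hform m n v v.
Proof.
move=> psd u_real v_real; apply: binary_form_minor => x y x_real y_real.
by rewrite -hform_comb; apply: psd => i; apply: rpredD; apply: rpredM.
Qed.

Lemma sum_ord_delta n (G : nat -> F) i :
  (i < n)%N -> \sum_(k < n) (k == i :> nat)%:R * G k = G i.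
Proof.
move=> lt_in; rewrite (bigD1 (Ordinal lt_in)) //= eqxx mul1r big1 ?addr0 // => k.
by rewrite -val_eqE /= => /negbTE ->; rewrite mul0r.
Qed.

Lemma hform_delta m n i j : (i < n)%N -> (j < n)%N ->
  hform m n (fun k => (k == i)%:R) (fun k => (k == j)%:R) = m (i + j)%N.
Proof.
move=> lt_in lt_jn.
rewrite /hform (eq_bigr (fun k : 'I_n => (k == i :> nat)%:R * m (k + j)%N)).
  exact: (sum_ord_delta (fun k => m (k + j)%N)).
move=> k _; under eq_bigr => l _ do rewrite -mulrA.
by rewrite -mulr_sumr (sum_ord_delta (fun l => m (k + l)%N)).
Qed.

Lemma hankel_psd_ge0 m n i : hankel_psd m n -> (i < n)%N -> 0 <= m (i + i)%N.
Proof.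
by move=> psd lt_in; rewrite -(hform_delta m lt_in lt_in); apply: psd => k; apply: rpred_nat.
Qed.

Lemma hankel_psd_minor m n i j : hankel_psd m n -> (i < n)%N -> (j < n)%N ->
  m (i + j)%N ^+ 2 <= m (i + i)%N * m (j + j)%N.
Proof.
move=> psd lt_in lt_jn; rewrite -(hform_delta m lt_in lt_jn).
rewrite -(hform_delta m lt_in lt_in) -(hform_delta m lt_jn lt_jn).
by apply: hform_cauchy_schwarz => // k; apply: rpred_nat.
Qed.

End HankelForms.

Section HankelPPT.
Variable C : numClosedFieldType.
Implicit Types m : nat -> C.

Lemma adj_ket i j : adj (ket C i j) = delta_mx 0 (mxvec_index i j).
Proof. by rewrite /adj map_delta_mx trmx_delta. Qed.

Lemma qform_ket A i j k l : (adj (ket C i j) *m A *m ket C k l) 0 0 = entry A i j k l.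
Proof. by rewrite adj_ket -rowE -colE !mxE. Qed.

Lemma qform_kets (A : 'M[C]_(3 * 3)) n (c : 'I_n -> C) (ii jj : 'I_n -> 'I_3) :
  let x := \sum_t c t *: ket C (ii t) (jj t) in
  (adj x *m A *m x) 0 0 =
    \sum_s \sum_t (c s)^* * c t * entry A (ii s) (jj s) (ii t) (jj t).
Proof.
cbv zeta; have -> : adj (\sum_t c t *: ket C (ii t) (jj t)) =
    \sum_t (c t)^* *: adj (ket C (ii t) (jj t)).
  apply/matrixP => r s; rewrite adjE !summxE rmorph_sum.
  by apply: eq_bigr => t _; rewrite !mxE rmorphM.
rewrite -mulmxA mulmx_suml summxE; apply: eq_bigr => s _.
rewrite !mulmx_sumr summxE; apply: eq_bigr => t _.
by rewrite -scalemxAl -!scalemxAr mulmxA scalerA mxE qform_ket.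
Qed.

Lemma hweight_ge0 i : 0 <= hweight C i.
Proof. by rewrite /hweight; case: ifP; rewrite ?sqrtC_ge0 ?ler0n. Qed.

Lemma hweight_neq0 i : hweight C i != 0.
Proof. by rewrite /hweight; case: ifP; rewrite ?sqrt2_neq0 ?oner_neq0. Qed.

Lemma entry_ptrans_hankel m i j k l : entry (ptrans (hankel m)) i j k l =
  (i + l == k + j)%N%:R * (hweight C i * hweight C l * hweight C k * hweight C j)
    * m (i + l)%N.
Proof. by rewrite entry_ptrans entry_hankel. Qed.

Lemma PPT_hankel_psd m : PPT (hankel m) -> hankel_psd m 3.
Proof.
move=> ppt u u_real; have := ppt (\sum_(t < 3) (u t / hweight C t ^+ 2) *: ket C t t).
rewrite qform_kets (eq_bigr (fun s : 'I_3 => \sum_(t < 3) u s * u t * m (s + t)%N)) //.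
move=> s _; apply: eq_bigr => t _.
rewrite entry_ptrans_hankel addnC eqxx /= conj_Creal; last first.
  by apply: rpredM => //; rewrite rpredV; apply/rpredX/ger0_real/hweight_ge0.
field; by rewrite ?hweight_neq0.
Qed.

Lemma hweight_widen_lift (t : 'I_2) :
  hweight C (widen_ord (leqnSn 2) t) * hweight C (lift ord0 t) = sqrtC 2.
Proof. by case: t => [[|[|//]] ?]; rewrite /hweight /= ?mul1r ?mulr1. Qed.

Lemma PPT_hankel_psd_shift m : PPT (hankel m) -> hankel_psd (fun d => m d.+1) 2.
Proof.
move=> ppt u u_real.
have := ppt (\sum_(t < 2) u t *: ket C (widen_ord (leqnSn 2) t) (lift ord0 t)).
rewrite qform_kets.
rewrite (eq_bigr (fun s : 'I_2 => 2 * \sum_(t < 2) u s * u t * m (s + t).+1)) => [|s _].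
  by rewrite -mulr_sumr pmulr_rge0 ?ltr0n.
rewrite mulr_sumr; apply: eq_bigr => t _.
rewrite entry_ptrans_hankel /= /bump /= !add1n !addnS addnC eqxx /= conj_Creal //.
ring: (hweight_widen_lift t) (hweight_widen_lift s) (sqrt2_sqr C).
Qed.

End HankelPPT.

Section Quadrature.
Variable F : numFieldType.
Implicit Types (m : nat -> F) (r : F).

Definition stieltjes_rep m (W1 l1 W2 l2 c4 : F) : Prop :=
  forall d, (d <= 4)%N -> m d = W1 * l1 ^+ d + W2 * l2 ^+ d + c4 * (d == 4)%:R.

Definition hankel_det2 m i := m i * m i.+2 - m i.+1 ^+ 2.

Definition hankel_det3 m :=
  m 0 * m 2 * m 4 - m 1 ^+ 2 * m 4 - m 0 * m 3 ^+ 2 + 2 * m 1 * m 2 * m 3 - m 2 ^+ 3.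

(** Gauss quadrature: the nodes [node m r] and [node m (- r)] are the roots of the
    orthogonal polynomial [hankel_det2 m 0 * x^2 - node_sum m * x + hankel_det2 m 1],
    [r] being a square root of its discriminant, and the weights solve the
    Vandermonde system for [m 0] and [m 1]. *)
Definition node_sum m := m 0 * m 3 - m 1 * m 2.

Definition node m r := (node_sum m + r) / (2 * hankel_det2 m 0).

Definition weight m r := hankel_det2 m 0 * (m 1 - m 0 * node m (- r)) / r.

Lemma quadrature_rep m r :
  hankel_det2 m 0 != 0 -> r != 0 ->
  r ^+ 2 = node_sum m ^+ 2 - 4 * hankel_det2 m 0 * hankel_det2 m 1 ->
  stieltjes_rep m (weight m r) (node m r) (weight m (- r)) (node m (- r))
    (hankel_det3 m / hankel_det2 m 0).
Proof.
rewrite /weight /node /node_sum /hankel_det3 /hankel_det2 => A_neq0 r_neq0 r_sqr.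
case=> [|[|[|[|[|//]]]]] _ /=; field: r_sqr; by rewrite ?A_neq0 ?r_neq0 ?pnatr_eq0.
Qed.

End Quadrature.

Lemma real_sqr_le_bounds (R : numDomainType) (x y : R) :
  x \is Num.real -> 0 <= y -> x ^+ 2 <= y ^+ 2 -> - y <= x <= y.
Proof.
move=> x_real y_ge0 le_xy; rewrite -real_ler_norml //.
by rewrite -(ler_pXn2r (ltn0Sn 1)) ?nnegrE ?normr_ge0 // real_normK.
Qed.

Section Stieltjes.
Variable C : numClosedFieldType.
Implicit Types m : nat -> C.

(** [c4] is the mass of an atom at infinity, seen only by the top moment. *)
Definition has_stieltjes_rep m := exists W1 l1 W2 l2 c4 : C,
  [/\ 0 <= W1, 0 <= l1, 0 <= W2, 0 <= l2 & 0 <= c4] /\ stieltjes_rep m W1 l1 W2 l2 c4.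

Lemma stieltjes_singular m : (forall d, (d <= 4)%N -> 0 <= m d) ->
  hankel_det2 m 0 = 0 -> 0 <= hankel_det2 m 1 -> m 0 * m 3 = m 1 * m 2 ->
  m 2 ^+ 2 <= m 0 * m 4 -> m 3 ^+ 2 <= m 2 * m 4 -> has_stieltjes_rep m.
Proof.
rewrite /hankel_det2 => m_ge0 /eqP; rewrite subr_eq0 eq_sym => /eqP m1_sqr.
move=> B_ge0 m3E h24 h34.
have [m0_eq0 | m0_neq0] := eqVneq (m 0) 0.
  have sqr_le0 x : 0 <= x -> x ^+ 2 <= 0 -> x = 0.
    by move=> x_ge0; rewrite real_exprn_even_le0 ?ger0_real // => /eqP.
  have m1_eq0 : m 1 = 0 by apply/eqP; rewrite -sqrf_eq0 m1_sqr m0_eq0 mul0r.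
  have m2_eq0 : m 2 = 0.
    by apply: sqr_le0 (m_ge0 2 isT) _; move: B_ge0; rewrite m1_eq0 mul0r sub0r oppr_ge0.
  have m3_eq0 : m 3 = 0.
    by apply: sqr_le0 (m_ge0 3 isT) _; rewrite m2_eq0 mul0r in h34.
  exists 0, 0, 0, 0, (m 4); split; first by rewrite lexx m_ge0.
  by case=> [|[|[|[|[|//]]]]] _ /=; rewrite ?m0_eq0 ?m1_eq0 ?m2_eq0 ?m3_eq0; ring.
have m0_gt0 : 0 < m 0 by rewrite lt_def m0_neq0 m_ge0.
have m2E : m 2 = m 1 ^+ 2 / m 0 by rewrite m1_sqr mulrC mulKf.
have {}m3E : m 3 = m 1 ^+ 3 / m 0 ^+ 2.
  by apply: (mulfI m0_neq0); rewrite m3E m2E; field.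
exists (m 0), (m 1 / m 0), 0, 0, (m 4 - m 2 ^+ 2 / m 0); split.
  by rewrite lexx divr_ge0 ?m_ge0 // subr_ge0 ler_pdivrMr // mulrC.
by case=> [|[|[|[|[|//]]]]] _ /=; rewrite ?m3E ?m2E; field.
Qed.

Lemma stieltjes_regular m : (forall d, (d <= 4)%N -> 0 <= m d) ->
  0 < hankel_det2 m 0 -> 0 <= hankel_det2 m 1 -> 0 <= hankel_det3 m ->
  has_stieltjes_rep m.
Proof.
move=> m_ge0 A_gt0 B_ge0 det_ge0.
have m_real d : (d <= 4)%N -> m d \is Num.real by move=> /m_ge0/ger0_real.
set A := hankel_det2 m 0 in A_gt0 *; set B := hankel_det2 m 1 in B_ge0 *.
set S := node_sum m.
have m0_gt0 : 0 < m 0.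
  rewrite lt_def m_ge0 // andbT; apply: contraTneq A_gt0 => m0_eq0.
  by rewrite /A /hankel_det2 m0_eq0 mul0r sub0r oppr_gt0 le_gtF // exprn_ge0 ?m_ge0.
have m1_gt0 : 0 < m 1.
  rewrite lt_def m_ge0 // andbT; apply: contraTneq A_gt0 => m1_eq0.
  have m2_eq0 : m 2 = 0.
    apply/eqP; rewrite -sqrf_eq0 eq_le exprn_ge0 ?m_ge0 // andbT.
    by move: B_ge0; rewrite /B /hankel_det2 m1_eq0 mul0r sub0r oppr_ge0.
  by rewrite /A /hankel_det2 m1_eq0 m2_eq0 mulr0 expr0n subr0 ltxx.
have S_ge0 : 0 <= S.
  have m1S : m 1 * S = m 0 * B + m 2 * A by rewrite /S /A /B /node_sum /hankel_det2; ring.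
  by rewrite -(pmulr_rge0 _ m1_gt0) m1S addr_ge0 ?mulr_ge0 ?m_ge0 // ltW.
set X := m 0 * S - 2 * A * m 1.
have X_real : X \is Num.real.
  by do ![apply: rpredB | apply: rpredM | apply: m_real | apply: rpred_nat].
have discr : m 0 ^+ 2 * (S ^+ 2 - 4 * A * B) = X ^+ 2 + 4 * A ^+ 3.
  by rewrite /X /S /A /B /node_sum /hankel_det2; ring.
have D_gt0 : 0 < S ^+ 2 - 4 * A * B.
  rewrite -(pmulr_rgt0 _ (exprn_gt0 2 m0_gt0)) discr.
  by rewrite ltr_wpDl ?real_exprn_even_ge0 // mulr_gt0 ?ltr0n ?exprn_gt0.
set r := sqrtC (S ^+ 2 - 4 * A * B).
have r_gt0 : 0 < r by rewrite sqrtC_gt0.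
have r_sqr : r ^+ 2 = S ^+ 2 - 4 * A * B by rewrite sqrtCK.
have /andP[X_lo X_hi] : - (m 0 * r) <= X <= m 0 * r.
  apply: real_sqr_le_bounds => //; first by rewrite mulr_ge0 ?ltW.
  by rewrite exprMn r_sqr discr lerDl mulr_ge0 ?ler0n ?exprn_ge0 ?ltW.
have /andP[_ r_le_S] : - S <= r <= S.
  apply: real_sqr_le_bounds => //; first exact/ger0_real/ltW.
  by rewrite r_sqr gerBl mulr_ge0 // mulr_ge0 ?ler0n ?ltW.
have A_neq0 : A != 0 by rewrite gt_eqF.
have r_neq0 : r != 0 by rewrite gt_eqF.
exists (weight m r), (node m r), (weight m (- r)), (node m (- r)), (hankel_det3 m / A).
split; last exact: quadrature_rep.
have -> : weight m r = (m 0 * r - X) / (2 * r).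
  by rewrite /weight /node -/S -/A /X; field; rewrite A_neq0 r_neq0.
have -> : weight m (- r) = (X + m 0 * r) / (2 * r).
  by rewrite /weight /node -/S -/A /X; field; rewrite A_neq0 r_neq0.
have two_r_ge0 : 0 <= 2 * r by rewrite mulr_ge0 ?ler0n ?ltW.
have two_A_ge0 : 0 <= 2 * A by rewrite mulr_ge0 ?ler0n ?ltW.
have A_ge0 := ltW A_gt0; have r_ge0 := ltW r_gt0.
rewrite /node -/S -/A; split; apply: divr_ge0 => //.
- by rewrite subr_ge0.
- exact: addr_ge0.
- by rewrite -lerBlDr sub0r.
- by rewrite subr_ge0.
Qed.

Theorem truncated_stieltjes m :
  hankel_psd m 3 -> hankel_psd (fun d => m d.+1) 2 -> has_stieltjes_rep m.
Proof.
move=> H3 H2.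
have m_ge0 d : (d <= 4)%N -> 0 <= m d.
  case: d => [|[|[|[|[|//]]]]] _.
  - exact: (hankel_psd_ge0 (i := 0) H3).
  - exact: (hankel_psd_ge0 (i := 0) H2).
  - exact: (hankel_psd_ge0 (i := 1) H3).
  - exact: (hankel_psd_ge0 (i := 1) H2).
  - exact: (hankel_psd_ge0 (i := 2) H3).
have m_real d : (d <= 4)%N -> m d \is Num.real by move=> /m_ge0/ger0_real.
have A_ge0 : 0 <= hankel_det2 m 0.
  by rewrite subr_ge0 (hankel_psd_minor (i := 0) (j := 1) H3).
have B_ge0 : 0 <= hankel_det2 m 1.
  by rewrite subr_ge0 (hankel_psd_minor (i := 0) (j := 1) H2).
have [A_eq0 | A_neq0] := eqVneq (hankel_det2 m 0) 0.
  apply: stieltjes_singular => //; last first.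
  - exact: (hankel_psd_minor (i := 1) (j := 2) H3).
  - exact: (hankel_psd_minor (i := 0) (j := 2) H3).
  (* Cauchy-Schwarz against e_2 on the kernel direction of the leading 2x2 block. *)
  pose u := nth 0 [:: m 1; - m 0; 0].
  have u_real k : u k \is Num.real.
    by case: k => [|[|[|k]]]; rewrite /u /= ?rpredN ?m_real ?nth_nil ?rpred0.
  have := hform_cauchy_schwarz (v := fun k => (k == 2)%:R) H3 u_real (fun=> rpred_nat _ _).
  rewrite hform_delta // (_ : hform m 3 u u = m 0 * hankel_det2 m 0); last first.
    by rewrite /hform !sum3 /u /hankel_det2 /=; ring.
  rewrite A_eq0 mulr0 mul0r (_ : hform m 3 u _ = m 1 * m 2 - m 0 * m 3); last first.
    by rewrite /hform !sum3 /u /=; ring.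
  rewrite real_exprn_even_le0 //=; last first.
    by do ![apply: rpredB | apply: rpredM | apply: m_real].
  by rewrite subr_eq0 eq_sym => /eqP.
apply: stieltjes_regular => //; first by rewrite lt_def A_neq0.
(* The last column of the adjugate of the Hankel matrix, so [Q(v) = A * det]. *)
pose v := nth 0 [:: hankel_det2 m 1; m 1 * m 2 - m 0 * m 3; hankel_det2 m 0].
have v_real k : v k \is Num.real.
  case: k => [|[|[|k]]]; rewrite /v /= ?nth_nil ?rpred0 //; try exact: ger0_real.
  by do ![apply: rpredB | apply: rpredM | apply: m_real].
have := H3 v v_real; rewrite (_ : hform m 3 v v = hankel_det2 m 0 * hankel_det3 m).
  by rewrite pmulr_rge0 // lt_def A_neq0.
by rewrite /hform !sum3 /v /hankel_det2 /hankel_det3 /=; ring.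
Qed.

End Stieltjes.

Lemma sum_prim_root_ratio (F : fieldType) n (z : F) a b : n.-primitive_root z ->
  \sum_(r < n) (z ^+ a / z ^+ b) ^+ r = (a == b %[mod n])%:R * n%:R.
Proof.
move=> prim_z; have n_gt0 := prim_order_gt0 prim_z.
have zb_neq0 : z ^+ b != 0 by rewrite expf_neq0 // (prim_root_eq0 prim_z) -lt0n.
rewrite -(eq_prim_root_expr prim_z); case: eqVneq => [-> | neq_ab].
  rewrite divff // mul1r (eq_bigr (fun=> 1)) => [|r _]; last exact: expr1n.
  by rewrite sumr_const card_ord.
have x_neq1 : z ^+ a / z ^+ b - 1 != 0.
  rewrite subr_eq0; apply: contra neq_ab => /eqP/(canRL (divfK zb_neq0)) ->.
  by rewrite mul1r.
apply: (mulfI x_neq1); rewrite -subrX1 /= mul0r mulr0 exprMn exprVn -!exprM.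
by rewrite !(mulnC _ n) !exprM (prim_expr_order prim_z) !expr1n invr1 mulr1 subrr.
Qed.

Section Phases.
Variable C : numClosedFieldType.

Lemma prim_root_conj n (z : C) : n.-primitive_root z -> z^* = z^-1.
Proof.
move=> prim_z; have n_gt0 := prim_order_gt0 prim_z.
have /eqP norm_z : `|z| == 1.
  by rewrite -(pexpr_eq1 n_gt0) ?normr_ge0 // -normrX (prim_expr_order prim_z) normr1.
by rewrite invC_norm norm_z expr1n invr1 mul1r.
Qed.

Lemma prim_root8_exists : exists z : C, 8.-primitive_root z.
Proof.
pose z : C := 4.-root (-1); have z4 : z ^+ 4 = -1 by rewrite rootCK.
have z8 : z ^+ 8 = 1 by rewrite (exprM z 4 2) z4 sqrrN expr1n.
have [k prim_z k_dvd8] := prim_order_exists (isT : (0 < 8)%N) z8.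
exists z; suff -> : 8%N = k by [].
have : ~~ (k %| 4)%N.
  by rewrite (prim_order_dvd prim_z) z4 lt_eqF // (lt_trans (ltrN10 _) ltr01).
have := dvdn_leq (isT : (0 < 8)%N) k_dvd8; move: k_dvd8.
by case: k {prim_z} => [|[|[|[|[|[|[|[|[|]]]]]]]]].
Qed.

(** Averaging over the phases [z ^+ r] kills the entries with [i + j != k + l]. *)
Definition phase (z : C) (r : nat) (v : 'cV[C]_3) : 'cV[C]_3 := \col_i (z ^+ r ^+ i * v i 0).

Lemma entry_phase_average n z (v : 'cV[C]_3) i j k l :
  n.-primitive_root z -> (forall i, (v i 0)^* = v i 0) ->
  entry (\sum_(r < n) proj (tens (phase z r v) (phase z r v))) i j k l =
    (i + j == k + l %[mod n])%:R * n%:R * (v i 0 * v j 0 * v k 0 * v l 0).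
Proof.
move=> prim_z v_real.
rewrite entry_sum -(sum_prim_root_ratio (i + j) (k + l) prim_z) mulr_suml.
apply: eq_bigr => r _; rewrite entry_proj_tens !mxE rmorphM !rmorphM /= !v_real.
rewrite !rmorphXn /= (prim_root_conj prim_z) !exprVn exprMn exprVn -!exprM.
rewrite !(mulnC _ r) !exprM !exprD.
have w_neq0 : z ^+ r != 0.
  by rewrite expf_neq0 // (prim_root_eq0 prim_z) -lt0n (prim_order_gt0 prim_z).
by field; rewrite !(expf_neq0 _ w_neq0).
Qed.

End Phases.

Section Atoms.
Variable C : numClosedFieldType.

Lemma adj_mul_selfE n (v : 'cV[C]_n) : (adj v *m v) 0 0 = \sum_i (v i 0)^* * v i 0.
Proof. by rewrite mxE; apply: eq_bigr => i _; rewrite adjE. Qed.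

Lemma unit_vec_phase n z r (v : 'cV[C]_3) :
  n.-primitive_root z -> unit_vec v -> unit_vec (phase z r v).
Proof.
rewrite /unit_vec !adj_mul_selfE => prim_z <-; apply: eq_bigr => i _.
rewrite mxE rmorphM !rmorphXn /= (prim_root_conj prim_z) !exprVn.
have w_neq0 : z ^+ r ^+ i != 0.
  by rewrite !expf_neq0 // (prim_root_eq0 prim_z) -lt0n (prim_order_gt0 prim_z).
by field.
Qed.

Definition atom (lam : C) : 'cV[C]_3 := \col_i (hweight C i * sqrtC lam ^+ i / (1 + lam)).

Lemma atom_ge0 lam i : 0 <= lam -> 0 <= atom lam i 0.
Proof.
move=> lam_ge0; rewrite mxE divr_ge0 ?mulr_ge0 ?hweight_ge0 ?exprn_ge0 ?sqrtC_ge0 //.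
by rewrite addr_ge0 ?ler01.
Qed.

Lemma unit_vec_atom lam : 0 <= lam -> unit_vec (atom lam).
Proof.
move=> lam_ge0; rewrite /unit_vec adj_mul_selfE sum3 !geC0_conj ?atom_ge0 //.
rewrite !mxE /hweight /=.
have lam1_neq0 : 1 + lam != 0 by rewrite gt_eqF // ltr_wpDr.
by field: (sqrtCK lam) (sqrt2_sqr C).
Qed.

Lemma hankel_geometric z lam : 8.-primitive_root z -> 0 <= lam ->
  hankel (fun d => lam ^+ d) =
    \sum_(r < 8) ((1 + lam) ^+ 4 / 8) *:
      proj (tens (phase z r (atom lam)) (phase z r (atom lam))).
Proof.
move=> prim_z lam_ge0; apply: entryP => i j k l.
rewrite -scaler_sumr entryZ entry_phase_average //; last first.
  by move=> i'; rewrite geC0_conj ?atom_ge0.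
have ij_lt8 : (i + j < 8)%N by have := ltn_ord i; have := ltn_ord j; lia.
have kl_lt8 : (k + l < 8)%N by have := ltn_ord k; have := ltn_ord l; lia.
rewrite entry_hankel !modn_small //; case: eqP => [ijkl | _]; last by rewrite !mul0r mulr0.
have -> : lam ^+ (i + j) =
    sqrtC lam ^+ i * sqrtC lam ^+ j * sqrtC lam ^+ k * sqrtC lam ^+ l.
  by rewrite -{1}(sqrtCK lam) -exprM mulnC muln2 -addnn {2}ijkl !exprD !mulrA.
have lam1_neq0 : 1 + lam != 0 by rewrite gt_eqF // ltr_wpDr.
by rewrite !mxE; field; rewrite lam1_neq0.
Qed.

End Atoms.

Section SeparableCone.
Variable C : numClosedFieldType.
Implicit Types (A B : 'M[C]_(3 * 3)) (s t : C).

Definition sep_cone A t := exists n (w : 'I_n -> C) (a b : 'I_n -> 'cV[C]_3),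
  [/\ forall k, 0 <= w k, \sum_k w k = t,
      forall k, unit_vec (a k) /\ unit_vec (b k) &
      A = \sum_k w k *: proj (tens (a k) (b k))].

Definition glue n1 n2 T (f : 'I_n1 -> T) (g : 'I_n2 -> T) (k : 'I_(n1 + n2)) : T :=
  match split k with inl i => f i | inr j => g j end.

Lemma glue_lshift n1 n2 T (f : 'I_n1 -> T) (g : 'I_n2 -> T) i :
  glue f g (lshift n2 i) = f i.
Proof. by rewrite /glue -[lshift n2 i]/(unsplit (inl _ i)) unsplitK. Qed.

Lemma glue_rshift n1 n2 T (f : 'I_n1 -> T) (g : 'I_n2 -> T) j :
  glue f g (rshift n1 j) = g j.
Proof. by rewrite /glue -[rshift n1 j]/(unsplit (inr _ j)) unsplitK. Qed.

Lemma sep_coneD A B s t : sep_cone A s -> sep_cone B t -> sep_cone (A + B) (s + t).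
Proof.
case=> n1 [w1 [a1 [b1 [w1_ge0 <- unit1 ->]]]].
case=> n2 [w2 [a2 [b2 [w2_ge0 <- unit2 ->]]]].
exists (n1 + n2)%N, (glue w1 w2), (glue a1 a2), (glue b1 b2); split.
- by move=> k; rewrite /glue; case: (split k).
- by rewrite big_split_ord; congr (_ + _); apply: eq_bigr => i _;
    rewrite ?glue_lshift ?glue_rshift.
- by move=> k; rewrite /glue; case: (split k).
- by rewrite big_split_ord; congr (_ + _); apply: eq_bigr => i _;
    rewrite ?glue_lshift ?glue_rshift.
Qed.

Lemma sep_coneZ c A t : 0 <= c -> sep_cone A t -> sep_cone (c *: A) (c * t).
Proof.
move=> c_ge0 [n [w [a [b [w_ge0 <- unit_ab ->]]]]].
exists n, (fun k => c * w k), a, b; split => //.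
- by move=> k; rewrite mulr_ge0.
- by rewrite mulr_sumr.
- by rewrite scaler_sumr; apply: eq_bigr => k _; rewrite scalerA.
Qed.

Lemma sep_cone_proj a b : unit_vec a -> unit_vec b -> sep_cone (proj (tens a b)) 1.
Proof.
move=> unit_a unit_b; exists 1%N, (fun=> 1), (fun=> a), (fun=> b).
by split; rewrite ?big_ord1 ?scale1r ?ler01.
Qed.

Lemma sep_cone_geometric lam : 0 <= lam ->
  sep_cone (hankel (fun d => lam ^+ d)) ((1 + lam) ^+ 4).
Proof.
move=> lam_ge0; have [z prim_z] := prim_root8_exists C.
rewrite (hankel_geometric prim_z lam_ge0).
exists 8%N, (fun=> (1 + lam) ^+ 4 / 8), (fun r => phase z r (atom lam)),
  (fun r => phase z r (atom lam)); split => //.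
- by move=> _; rewrite divr_ge0 ?ler0n ?exprn_ge0 ?addr_ge0 ?ler01.
- by rewrite sumr_const card_ord -mulr_natr; field.
- by move=> r; split; apply: unit_vec_phase prim_z (unit_vec_atom lam_ge0).
Qed.

Lemma unit_vec_delta (i : 'I_3) : unit_vec (delta_mx i 0 : 'cV[C]_3).
Proof.
rewrite /unit_vec adj_mul_selfE (bigD1 i) //= big1 => [|j neq_ji]; rewrite !mxE.
  by rewrite eqxx /= rmorph1 mulr1 addr0.
by rewrite (negbTE neq_ji) /= rmorph0 mul0r.
Qed.

Lemma hankel_delta4 :
  hankel (fun d => (d == 4)%:R) = proj (tens (delta_mx q2 0) (delta_mx q2 0)) :> 'M[C]_(3 * 3).
Proof.
apply: entryP => i j k l; rewrite entry_hankel entry_proj_tens !mxE /hweight.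
case: (ord3P i) => ->; case: (ord3P j) => ->; case: (ord3P k) => ->; case: (ord3P l) => ->;
  by rewrite /= ?(mul0r, mulr0, mul1r, mulr1, rmorph0, rmorph1).
Qed.

End SeparableCone.

Lemma separable_hankel (C : numClosedFieldType) (m : nat -> C) :
  hankel_psd m 3 -> hankel_psd (fun d => m d.+1) 2 ->
  m 0 + 4 * m 1 + 6 * m 2 + 4 * m 3 + m 4 = 1 -> separable (hankel m).
Proof.
move=> H3 H2 mass.
have [W1 [l1 [W2 [l2 [c4 [[W1_ge0 l1_ge0 W2_ge0 l2_ge0 c4_ge0] rep]]]]]] :=
  truncated_stieltjes H3 H2.
have -> : hankel m = W1 *: hankel (fun d => l1 ^+ d) + W2 *: hankel (fun d => l2 ^+ d)
                     + c4 *: hankel (fun d => (d == 4)%:R).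
  apply: entryP => i j k l; rewrite !entryD !entryZ !entry_hankel rep; first by ring.
  by have := ltn_ord i; have := ltn_ord j; lia.
rewrite hankel_delta4.
have e2_unit := unit_vec_delta C q2.
have := sep_coneD (sep_coneD (sep_coneZ W1_ge0 (sep_cone_geometric l1_ge0))
                             (sep_coneZ W2_ge0 (sep_cone_geometric l2_ge0)))
                  (sep_coneZ c4_ge0 (sep_cone_proj e2_unit e2_unit)).
have total : W1 * (1 + l1) ^+ 4 + W2 * (1 + l2) ^+ 4 + c4 * 1 = 1.
  by rewrite -[RHS]mass !rep //=; ring.
(* [separable A] unfolds to [sep_cone A 1]. *)
by rewrite total; apply.
Qed.

Theorem corollary1 (C : numClosedFieldType) (p : 'I_3 -> 'I_3 -> C) (alpha : C) :
  (forall i j : 'I_3, (i <= j)%N -> 0 <= p i j) ->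
  \sum_(i < 3) \sum_(j < 3 | (i <= j)%N) p i j = 1 ->
  psd (rhoS p alpha) ->
  p q1 q1 = 2 * p q0 q2 ->
  2 * p q0 q2 = sqrtC 2 * alpha ->
  (separable (rhoS p alpha) <-> PPT (rhoS p alpha)).
Proof.
move=> p_ge0 p_sum _ p11 p02_alpha.
have alphaE : alpha = sqrtC 2 * p q0 q2.
  by apply: (mulfI (sqrt2_neq0 C)); rewrite -p02_alpha mulrA -expr2 sqrt2_sqr.
have p02_real : (p q0 q2)^* = p q0 q2 by rewrite conj_Creal ?ger0_real ?p_ge0.
rewrite (rhoS_hankel p11 alphaE p02_real); split; first exact: separable_PPT.
move=> ppt; apply: separable_hankel.
- exact: PPT_hankel_psd.
- exact: PPT_hankel_psd_shift.
- rewrite -[RHS]p_sum; under eq_bigr => i _ do rewrite big_mkcond sum3.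
  by rewrite sum3 /= p11; field.
Qed.
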